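(* Let $n\ge3$, $k\ge0$ with $k<n\le 2k$, and consider the $n+k$ points $u_1,\dots,u_{n+k}$ arranged clockwise on a circle. There do not exist points $v_1,v_2,v_3,v_4$ among these such that the pairs $(v_1,v_2)$ and $(v_3,v_4)$ each have size at most $k+1$, and (1) $v_3$ and $v_4$ both lie in $(v_1,v_2)$, and (2) every point $u_i$, $i\in[n+k]$, lies in $(v_1,v_2)$ or in $(v_3,v_4)$.
   Context: Points $u_1,\dots,u_{n+k}$ are evenly spaced on a circle in clockwise order. For points $v=u_i$ and $v'=u_j$, the size of the pair $(v,v')$ is the number of points visited (including both endpoints) when travelling clockwise from $v$ to $v'$, i.e. $j-i+1$ modulo $n+k$, taken in $\{1,\dots,n+k\}$. A point $w$ lies in $(v,v')$ if $w$ is one of the points visited when travelling clockwise from $v$ to $v'$ (endpoints included). *)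

From mathcomp Require Import all_boot.
Set Implicit Arguments. Unset Strict Implicit. Unset Printing Implicit Defensive.

(* Points u_1..u_N (N = n+k) are represented 0-based by 'I_N, in clockwise
   order: point i is u_(i+1). *)

Definition cw_dist (N : nat) (v w : 'I_N) : nat := (w + N - v) %% N.

(* Size of the pair (v,v'): number of points visited (endpoints included)
   going clockwise from v to v', i.e. j - i + 1 mod N taken in {1..N}. *)
Definition pair_size (N : nat) (v v' : 'I_N) : nat := (cw_dist v v').+1.

Definition lies_in (N : nat) (w v v' : 'I_N) : bool := cw_dist v w <= cw_dist v v'.

(* Measure positions from v1, so that the arc (v1,v2) is the initial segment
   [0, d] with d <= k.  The point u just after v2 lies outside (v1,v2), hence
   in (v3,v4).  If v3 comes before v4 in (v1,v2), then (v3,v4) stays inside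
   [0, d] and misses u.  Otherwise (v3,v4) runs from v3 around the rest of the
   circle back to v4, so it has at least n + k - d >= n > k steps, which
   contradicts its size being at most k + 1. *)

From mathcomp Require Import all_boot zify.

Set Implicit Arguments.
Unset Strict Implicit.
Unset Printing Implicit Defensive.

Lemma modn_addBr_small (x y N : nat) : x < N -> y < N ->
  (y + N - x) %% N = if x <= y then y - x else y + N - x.
Proof.
move=> ltxN ltyN; case: leqP => [lexy | ltyx].
  by rewrite -addnBAC // modnDr modn_small // ltn_subLR; lia.
by rewrite modn_small //; lia.
Qed.

Section Circle.

Variable N : nat.
Implicit Types o v w : 'I_N.

Lemma cw_distE v w : cw_dist v w = if v <= w then w - v else w + N - v.
Proof. exact: modn_addBr_small. Qed.

Lemma cw_dist_from o v w :
  cw_dist v w = if cw_dist o v <= cw_dist o w then cw_dist o w - cw_dist o v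
                else cw_dist o w + N - cw_dist o v.
Proof.
rewrite !cw_distE.
have := ltn_ord o; have := ltn_ord v; have := ltn_ord w.
by repeat case: ifP; lia.
Qed.

Lemma cw_dist_ordS v w : pair_size v w < N -> cw_dist v (ordS w) = pair_size v w.
Proof.
rewrite /pair_size !cw_distE /=.
have ltvN := ltn_ord v; have ltwN := ltn_ord w.
have [ltSN | geSN] := ltnP w.+1 N.
  by rewrite modn_small //; repeat case: ifP; lia.
have -> : w.+1 = N by lia.
by rewrite modnn; repeat case: ifP; lia.
Qed.

End Circle.

Theorem proposition5p2 (n k : nat) :
  3 <= n -> k < n -> n <= 2 * k ->
  ~ (exists v1 v2 v3 v4 : 'I_(n + k),
       [/\ pair_size v1 v2 <= k.+1,
           pair_size v3 v4 <= k.+1,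
           lies_in v3 v1 v2 && lies_in v4 v1 v2 &
           forall i : 'I_(n + k), lies_in i v1 v2 || lies_in i v3 v4]).
Proof.
move=> n_ge3 ltkn _ [v1 [v2 [v3 [v4 [size12 size34 /andP[in3 in4] cover]]]]].
have succ_pos : cw_dist v1 (ordS v2) = pair_size v1 v2.
  by apply: cw_dist_ordS; lia.
have succ_out : ~~ lies_in (ordS v2) v1 v2.
  by rewrite /lies_in succ_pos /pair_size ltnn.
have := cover (ordS v2); rewrite (negbTE succ_out) /lies_in.
rewrite (cw_dist_from v1 v3 (ordS v2)) succ_pos.
move: size34; rewrite /pair_size (cw_dist_from v1 v3 v4).
move: in3 in4 size12; rewrite /lies_in /pair_size.
by repeat case: ifP; lia.
Qed.
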